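(* The estimate of $\Theta$ returned by the BAGUS algorithm (described in the context) is always symmetric, and it is also positive definite if the initial value $\Theta^{(0)}$ is positive definite.
   Context: BAGUS algorithm. Input: sample covariance $S=[s_{ij}]$ ($p\times p$), sample size $n$, hyperparameters $0<v_0<v_1$, $\eta\in(0,1)$, $\tau>0$, $B>0$, and an initial symmetric matrix $\Theta^{(0)}$ (the paper uses $\Theta^{(0)}=I$), with $W$ initialized as $W=(\Theta^{(0)})^{-1}$ (so $W=I$ when $\Theta^{(0)}=I$); throughout, $W$ is maintained equal to $\Theta^{-1}$. Repeat until convergence: (E-step) for all $i\ne j$ set $p_{ij}$ by $\log\frac{p_{ij}}{1-p_{ij}}=\log\frac{v_0}{v_1}+\log\frac{\eta}{1-\eta}-\frac{|\theta_{ij}|}{v_1}+\frac{|\theta_{ij}|}{v_0}$, using the current $\Theta$. (M-step) for $j=1,\dots,p$: partition $\Theta$ (and likewise $W,S,P=[p_{ij}]$) by moving row and column $j$ to the end: $\Theta_{11}$ is $\Theta$ with row and column $j$ deleted, $\theta_{12}$ is column $j$ without its $j$-th entry, $\theta_{22}=\theta_{jj}$, and similarly $W_{11},w_{12},w_{22}$, $s_{12},s_{22}$, $P_{12}$. Set $w_{22}\leftarrow s_{22}+\frac2n\tau$. Compute $\Theta_{11}^{-1}=W_{11}-w_{12}w_{12}^T/w_{22}$ (the inverse of the current $\Theta_{11}$). Update $\theta_{12}$ by cyclic coordinate descent: for each coordinate $k$, solve for $(\theta_{12})_k$ the equation $n s_{12}+nw_{22}\Theta_{11}^{-1}\theta_{12}+\big(\frac1{v_1}P_{12}+\frac1{v_0}(1-P_{12})\big)\odot\mathrm{sign}(\theta_{12})=0$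 in coordinate $k$ with the other coordinates fixed, repeating until convergence; if the resulting matrix has spectral norm exceeding $B$, keep the previous $\theta_{12}$ instead. Then set $\theta_{22}\leftarrow\frac1{w_{22}}+\theta_{12}^T\Theta_{11}^{-1}\theta_{12}$, place $\theta_{12}$ in both column $j$ and row $j$ of $\Theta$, and update $W_{11},w_{12}$ so that $W=\Theta^{-1}$ via $W_{11}=\Theta_{11}^{-1}+\frac{\Theta_{11}^{-1}\theta_{12}\theta_{12}^T\Theta_{11}^{-1}}{\theta_{22}-\theta_{12}^T\Theta_{11}^{-1}\theta_{12}}$, $w_{12}=-\frac{\Theta_{11}^{-1}\theta_{12}}{\theta_{22}-\theta_{12}^T\Theta_{11}^{-1}\theta_{12}}$. Output: $\Theta$ and $P$. Here $\odot$ is entrywise multiplication and $\mathrm{sign}$ is applied entrywise. *)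

From HB Require Import structures.
From mathcomp Require Import all_boot all_order all_algebra.
From mathcomp Require Import all_classical all_reals all_analysis.
Set Implicit Arguments. Unset Strict Implicit. Unset Printing Implicit Defensive.
Import Order.TTheory GRing.Theory Num.Theory.
Local Open Scope ring_scope.
Local Open Scope classical_set_scope.

Section BAGUS.
Variable R : realType.

Definition posdef (p : nat) (A : 'M[R]_p) : Prop :=
  A^T = A /\ forall x : 'cV[R]_p, x != 0 -> 0 < (x^T *m A *m x) 0 0.
Definition possemidef (p : nat) (A : 'M[R]_p) : Prop :=
  A^T = A /\ forall x : 'cV[R]_p, 0 <= (x^T *m A *m x) 0 0.

Definition specnorm (p : nat) (A : 'M[R]_p) : R :=
  sup [set r | exists x : 'cV[R]_p,
        (x^T *m x) 0 0 = 1 /\ r = Num.sqrt (((A *m x)^T *m (A *m x)) 0 0)].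

Definition sub11 (p : nat) (M : 'M[R]_p) (j : 'I_p) : 'M[R]_p.-1 :=
  \matrix_(a, b) M (lift j a) (lift j b).
Definition col12 (p : nat) (M : 'M[R]_p) (j : 'I_p) : 'cV[R]_p.-1 :=
  \col_a M (lift j a) j.

Definition ext_col (p : nat) (j : 'I_p) (t : 'cV[R]_p.-1) (i : 'I_p) : R :=
  if unlift j i is Some a then t a 0 else 0.
Definition assemble (p : nat) (M : 'M[R]_p) (j : 'I_p) (t : 'cV[R]_p.-1) (d : R)
  : 'M[R]_p :=
  \matrix_(a, b) if (a == j) && (b == j) then d
                 else if a == j then ext_col j t b
                 else if b == j then ext_col j t a
                 else M a b.

Definition estep (v0 v1 eta : R) (p : nat) (Th : 'M[R]_p) : 'M[R]_p :=
  \matrix_(i, j)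
    if i == j then 0
    else let L := ln (v0 / v1) + ln (eta / (1 - eta))
                  - `|Th i j| / v1 + `|Th i j| / v0 in
         1 / (1 + expR (- L)).

(* Exact solution in x of  a x + b + c sign(x) = 0  (with sign(0) read as
   the subdifferential [-1,1]): soft thresholding. *)
Definition soft_solve (a b c : R) : R :=
  - Num.sg b * Num.max (`|b| - c) 0 / a.

(* One coordinate-descent update of coordinate k of th for the equation
   n s12 + n w22 Ainv th + (P12/v1 + (1-P12)/v0) .* sign(th) = 0. *)
Definition cd_coord (nR w22 v0 v1 : R) (q : nat) (Ainv : 'M[R]_q)
    (s12 P12 : 'cV[R]_q) (th : 'cV[R]_q) (k : 'I_q) : 'cV[R]_q :=
  let a := nR * w22 * Ainv k k in
  let b := nR * s12 k 0 + nR * w22 * (\sum_(l < q | l != k) Ainv k l * th l 0) in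
  let c := P12 k 0 / v1 + (1 - P12 k 0) / v0 in
  \col_i (if i == k then soft_solve a b c else th i 0).

Definition cd_sweep (nR w22 v0 v1 : R) (q : nat) (Ainv : 'M[R]_q)
    (s12 P12 : 'cV[R]_q) (th : 'cV[R]_q) : 'cV[R]_q :=
  foldl (cd_coord nR w22 v0 v1 Ainv s12 P12) th (enum 'I_q).

(* The M-step update of column j, with m cyclic coordinate-descent sweeps
   ("repeating until convergence": m is the number of sweeps performed). *)
Definition col_update (n : nat) (v0 v1 tau B : R) (p : nat)
    (S P : 'M[R]_p) (m : nat) (Th : 'M[R]_p) (j : 'I_p) : 'M[R]_p :=
  let nR := n%:R in
  let w22 := S j j + 2 / nR * tau in
  let Ainv := invmx (sub11 Th j) in
  let th0 := col12 Th j in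
  let th1 := iter m (cd_sweep nR w22 v0 v1 Ainv (col12 S j) (col12 P j)) th0 in
  let diag (t : 'cV[R]_p.-1) := 1 / w22 + (t^T *m Ainv *m t) 0 0 in
  let cand := assemble Th j th1 (diag th1) in
  let th := if B < specnorm cand then th0 else th1 in
  assemble Th j th (diag th).

Definition mstep (n : nat) (v0 v1 tau B : R) (p : nat)
    (S P : 'M[R]_p) (ms : 'I_p -> nat) (Th : 'M[R]_p) : 'M[R]_p :=
  foldl (fun M j => col_update n v0 v1 tau B S P (ms j) M j) Th (enum 'I_p).

Fixpoint bagus (n : nat) (v0 v1 eta tau B : R) (p : nat) (S : 'M[R]_p)
    (nin : nat -> 'I_p -> nat) (Th0 : 'M[R]_p) (T : nat) : 'M[R]_p :=
  match T with
  | 0 => Th0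
  | T'.+1 =>
      let Th := bagus n v0 v1 eta tau B S nin Th0 T' in
      mstep n v0 v1 tau B S (estep v0 v1 eta Th) (nin T') Th
  end.
End BAGUS.

(** Each column update of BAGUS leaves Θ₁₁ untouched and writes some vector t
  (whatever coordinate descent and the spectral-norm guard produce) into row
  and column j, with diagonal entry θⱼⱼ = 1/w₂₂ + tᵀΘ₁₁⁻¹t. Symmetry is
  therefore preserved, and so is positive definiteness, by the Schur
  complement criterion: Θ₁₁ is positive definite as a principal submatrix and
  the Schur complement θⱼⱼ - tᵀΘ₁₁⁻¹t = 1/w₂₂ is positive since
  w₂₂ = sⱼⱼ + 2τ/n > 0. Neither the E-step weights nor the hyperparameters
  v₀, v₁, η, B play any role. *)
From HB Require Import structures.
From mathcomp Require Import all_boot all_order all_algebra.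
From mathcomp Require Import all_classical all_reals all_analysis.
From mathcomp Require Import ring.
Import Order.TTheory GRing.Theory Num.Theory.
Local Open Scope ring_scope.
Set Implicit Arguments. Unset Strict Implicit. Unset Printing Implicit Defensive.

Section SchurComplement.
Variable R : realType.
Implicit Types (p : nat).

Lemma quad_form_sum p (M : 'M[R]_p) (x : 'cV[R]_p) :
  (x^T *m M *m x) 0 0 = \sum_i \sum_k x i 0 * M i k * x k 0.
Proof.
rewrite mxE exchange_big /=; apply: eq_bigr => k _; rewrite !mxE big_distrl /=.
by apply: eq_bigr => i _; rewrite !mxE.
Qed.

Lemma dot_sum p (t x : 'cV[R]_p) : (t^T *m x) 0 0 = \sum_i t i 0 * x i 0.
Proof. by rewrite mxE; apply: eq_bigr => i _; rewrite !mxE. Qed.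

Lemma quad_form_split p (M : 'M[R]_p) (j : 'I_p) (x : 'cV[R]_p) : M^T = M ->
  (x^T *m M *m x) 0 0 = ((row' j x)^T *m sub11 M j *m row' j x) 0 0
    + 2 * x j 0 * ((col12 M j)^T *m row' j x) 0 0 + x j 0 ^+ 2 * M j j.
Proof.
move=> M_sym; have Msym a b : M b a = M a b by rewrite -[in RHS]M_sym mxE.
rewrite !quad_form_sum dot_sum !(bigD1_ord j) //=.
under [X in _ + _ + X]eq_bigr => k _ do rewrite (bigD1_ord j) //=.
rewrite big_split /=.
under [X in _ = X + _ + _]eq_bigr => k _ do under eq_bigr => i _ do rewrite !mxE.
under [X in _ = _ + _ * X + _]eq_bigr => k _ do rewrite !mxE.
have row_j : \sum_(i < p.-1) x j 0 * M j (lift j i) * x (lift j i) 0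
    = x j 0 * \sum_(k < p.-1) M (lift j k) j * x (lift j k) 0.
  by rewrite big_distrr; apply: eq_bigr => i _ /=; rewrite (Msym (lift j i)) mulrA.
have col_j : \sum_(i < p.-1) x (lift j i) 0 * M (lift j i) j * x j 0
    = x j 0 * \sum_(k < p.-1) M (lift j k) j * x (lift j k) 0.
  by rewrite big_distrr; apply: eq_bigr => i _ /=; ring.
by rewrite row_j col_j; ring.
Qed.

Lemma sub11_sym p (M : 'M[R]_p) j : M^T = M -> (sub11 M j)^T = sub11 M j.
Proof. by move=> M_sym; apply/matrixP => a b; rewrite !mxE -[in RHS]M_sym mxE. Qed.

Lemma assemble_sym p (M : 'M[R]_p) j t d :
  (sub11 M j)^T = sub11 M j -> (assemble M j t d)^T = assemble M j t d.
Proof.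
move=> M11_sym; apply/matrixP => a b; rewrite !mxE.
case: (unliftP j a) => [a' ->|->]; case: (unliftP j b) => [b' ->|->];
  rewrite ?eqxx ?lift_eqF //=.
by have := congr1 (fun A : 'M[R]_p.-1 => A a' b') M11_sym; rewrite !mxE.
Qed.

Lemma assemble_sub11 p (M : 'M[R]_p) j t d : sub11 (assemble M j t d) j = sub11 M j.
Proof. by apply/matrixP => a b; rewrite !mxE !lift_eqF. Qed.

Lemma assemble_col12 p (M : 'M[R]_p) j t d : col12 (assemble M j t d) j = t.
Proof. by apply/matrixP => a b; rewrite !mxE eqxx lift_eqF /ext_col liftK ord1. Qed.

Lemma assemble_diag p (M : 'M[R]_p) j t d : assemble M j t d j j = d.
Proof. by rewrite mxE eqxx. Qed.

Lemma row'_cV_eq0 p (j : 'I_p) (x : 'cV[R]_p) : row' j x = 0 -> x j 0 = 0 -> x = 0.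
Proof.
move=> x'0 xj0; apply/matrixP => i k; rewrite ord1 mxE.
case: (unliftP j i) => [a ->|->] //.
by have := congr1 (fun y : 'cV[R]_p.-1 => y a 0) x'0; rewrite !mxE.
Qed.

Lemma posdef_possemidef p (A : 'M[R]_p) : posdef A -> possemidef A.
Proof.
move=> [A_sym A_pos]; split=> // x.
by have [->|/A_pos/ltW //] := eqVneq x 0; rewrite mulmx0 mxE.
Qed.

Lemma possemidef_diag_ge0 p (S : 'M[R]_p) j : possemidef S -> 0 <= S j j.
Proof.
case=> _ /(_ (delta_mx j 0)).
by rewrite trmx_delta -mulmxA -colE -rowE !mxE.
Qed.

Lemma posdef_sub11 p (M : 'M[R]_p) j : posdef M -> posdef (sub11 M j).
Proof.
move=> [M_sym M_pos]; split; first exact: sub11_sym.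
move=> y y_neq0; pose x := \col_i ext_col j y i.
have x'E : row' j x = y by apply/matrixP => a b; rewrite !mxE /ext_col liftK ord1.
have xj0 : x j 0 = 0 by rewrite mxE /ext_col unlift_none.
have x_neq0 : x != 0.
  by apply: contra y_neq0 => /eqP x0; rewrite -x'E x0; apply/eqP/matrixP => a b; rewrite !mxE.
move: (M_pos x x_neq0); rewrite (quad_form_split j _ M_sym) x'E xj0.
by rewrite mulr0 mul0r expr0n mul0r !addr0.
Qed.

Lemma posdef_unitmx p (A : 'M[R]_p) : posdef A -> A \in unitmx.
Proof.
move=> [_ A_pos]; rewrite unitmxE unitfE; apply/negP => /det0P[v v_neq0 vA0].
have : v^T != 0 by rewrite trmx_eq0.
by move/A_pos; rewrite trmxK vA0 mul0mx mxE ltxx.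
Qed.

Lemma posdef_schur p (M : 'M[R]_p) j t d (A := sub11 M j)
    (q := (t^T *m invmx A *m t) 0 0) :
  posdef A -> q < d -> posdef (assemble M j t d).
Proof.
move=> A_pd schur_gt0; have A_unit := posdef_unitmx A_pd.
have [A_sym A_pos] := A_pd.
have M'_sym := assemble_sym t d A_sym.
split=> // x x_neq0.
rewrite (quad_form_split j _ M'_sym) assemble_sub11 assemble_col12 assemble_diag -/A.
set y := row' j x; set z := x j 0; set u := invmx A *m t.
have uA : u^T *m A = t^T by rewrite trmx_mul trmx_inv A_sym -mulmxA mulVmx ?mulmx1.
have Au : A *m u = t by rewrite mulmxA mulmxV ?mul1mx.
have completed_square : ((y + z *: u)^T *m A *m (y + z *: u)) 0 0
    = (y^T *m A *m y) 0 0 + 2 * z * (t^T *m y) 0 0 + z ^+ 2 * q.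
  have -> : (y + z *: u)^T = y^T + z *: u^T by rewrite linearD /= linearZ.
  rewrite !mulmxDl !mulmxDr -!scalemxAl uA.
  rewrite -!scalemxAr -!mulmxA Au /q -mulmxA -/u !mxE.
  have -> : \sum_i y^T 0 i * t i 0 = \sum_i t^T 0 i * y i 0.
    by apply: eq_bigr => i _; rewrite !mxE mulrC.
  ring.
have -> : (y^T *m A *m y) 0 0 + 2 * z * (t^T *m y) 0 0 + z ^+ 2 * d
    = ((y + z *: u)^T *m A *m (y + z *: u)) 0 0 + z ^+ 2 * (d - q).
  by rewrite completed_square; ring.
have [z0|z_neq0] := eqVneq z 0.
  rewrite z0 scale0r addr0 expr0n mul0r addr0; apply: A_pos.
  by apply: contra x_neq0 => /eqP y0; apply/eqP; exact: row'_cV_eq0 y0 z0.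
apply: ltr_wpDl; first exact/(posdef_possemidef A_pd).2.
by rewrite mulr_gt0 ?subr_gt0 // exprn_even_gt0 ?z_neq0 ?orbT.
Qed.
End SchurComplement.

Lemma foldl_invariant (T U : Type) (Q : T -> Prop) (f : T -> U -> T) s x :
  Q x -> (forall y u, Q y -> Q (f y u)) -> Q (foldl f x s).
Proof. by elim: s x => //= u s IHs x Qx Qf; apply: IHs => //; apply: Qf. Qed.

Section BagusInvariants.
Variables (R : realType) (n : nat) (v0 v1 eta tau B : R) (p : nat) (S : 'M[R]_p).
Hypotheses (n_gt0 : (0 < n)%N) (S_psd : possemidef S) (tau_gt0 : 0 < tau).

Lemma col_updateE (P Th : 'M[R]_p) m j : exists t,
  col_update n v0 v1 tau B S P m Th j =
  assemble Th j t (1 / (S j j + 2 / n%:R * tau) + (t^T *m invmx (sub11 Th j) *m t) 0 0).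
Proof. by rewrite /col_update /=; case: ifP => _; eexists. Qed.

Lemma col_update_sym (P Th : 'M[R]_p) m j : Th^T = Th ->
  (col_update n v0 v1 tau B S P m Th j)^T = col_update n v0 v1 tau B S P m Th j.
Proof. by move=> Th_sym; have [t ->] := col_updateE P Th m j; exact/assemble_sym/sub11_sym. Qed.

Lemma col_update_posdef (P Th : 'M[R]_p) m j : posdef Th ->
  posdef (col_update n v0 v1 tau B S P m Th j).
Proof.
move=> Th_pd; have [t ->] := col_updateE P Th m j.
have w22_gt0 : 0 < S j j + 2 / n%:R * tau.
  by rewrite ltr_wpDl ?possemidef_diag_ge0 // mulr_gt0 // divr_gt0 ?ltr0n.
by apply: posdef_schur (posdef_sub11 j Th_pd) _; rewrite ltrDr divr_gt0.
Qed.

Lemma mstep_invariant (Q : 'M[R]_p -> Prop) (P Th : 'M[R]_p) ms :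
  (forall M j m, Q M -> Q (col_update n v0 v1 tau B S P m M j)) ->
  Q Th -> Q (mstep n v0 v1 tau B S P ms Th).
Proof. by move=> QP QTh; apply: foldl_invariant => // M j; apply: QP. Qed.

Lemma bagus_sym nin (Th0 : 'M[R]_p) T : Th0^T = Th0 ->
  (bagus n v0 v1 eta tau B S nin Th0 T)^T = bagus n v0 v1 eta tau B S nin Th0 T.
Proof.
move=> Th0_sym; elim: T => //= T IHT.
by apply: (mstep_invariant (Q := fun M => M^T = M)) => // *; apply: col_update_sym.
Qed.

Lemma bagus_posdef nin (Th0 : 'M[R]_p) T : posdef Th0 ->
  posdef (bagus n v0 v1 eta tau B S nin Th0 T).
Proof.
move=> Th0_pd; elim: T => //= T IHT.
by apply: (mstep_invariant (Q := @posdef R p)) => // *; apply: col_update_posdef.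
Qed.
End BagusInvariants.

Theorem theorem5 (R : realType) (p n : nat) (S : 'M[R]_p)
    (v0 v1 eta tau B : R) (Theta0 : 'M[R]_p)
    (nin : nat -> 'I_p -> nat) (T : nat) :
  (0 < n)%N -> possemidef S ->
  0 < v0 -> v0 < v1 -> 0 < eta -> eta < 1 -> 0 < tau -> 0 < B ->
  Theta0^T = Theta0 ->
  (bagus n v0 v1 eta tau B S nin Theta0 T)^T = bagus n v0 v1 eta tau B S nin Theta0 T
  /\ (posdef Theta0 -> posdef (bagus n v0 v1 eta tau B S nin Theta0 T)).
Proof.
move=> n_gt0 S_psd _ _ _ _ tau_gt0 _ Theta0_sym.
by split; [apply: bagus_sym | apply: bagus_posdef].
Qed.
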